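(* Let $N$ be a natural number, $P=\{a\subseteq N: |a|\geq 2\}$, and let $\|\cdot\|_3$ be the graph coloring norm on subsets of $P$ (defined in the context). If $A\subseteq P$ and $\|A\|_3=k$, then \[|A|\leq 2^N-2^k\,2^{N/2^k}+2^k-1.\]
   Context: $N=\{0,\ldots,N-1\}$. For $A\subseteq P$ and $z\subseteq N$ let $A\restriction z=\{a\in A: a\subseteq z\}$. The relation ''$\|A\|_3\geq m$'' is defined recursively: $\|A\|_3\geq 0$ always; $\|A\|_3\geq 1$ iff $A\neq\emptyset$; for $m\geq 1$, $\|A\|_3\geq m+1$ iff for every $z\subseteq N$ either $\|A\restriction z\|_3\geq m$ or $\|A\restriction(N\setminus z)\|_3\geq m$. Then $\|A\|_3$ is the largest $m$ with $\|A\|_3\geq m$. *)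

From mathcomp Require Import all_boot.
From Stdlib Require Import Reals.
Set Implicit Arguments. Unset Strict Implicit. Unset Printing Implicit Defensive.

(* [N] = 'I_N ; subsets of [N] are {set 'I_N}; families A ⊆ P are {set {set 'I_N}}. *)

Definition inP (N : nat) (A : {set {set 'I_N}}) : Prop :=
  forall a, a \in A -> 2 <= #|a|.

Definition restr (N : nat) (A : {set {set 'I_N}}) (z : {set 'I_N}) :
  {set {set 'I_N}} := [set a in A | a \subset z].

Fixpoint norm3_ge (N : nat) (A : {set {set 'I_N}}) (m : nat) {struct m} : bool :=
  match m with
  | 0 => true
  | S m' =>
      match m' with
      | 0 => A != set0
      | _ => [forall z : {set 'I_N},
                norm3_ge (restr A z) m' || norm3_ge (restr A (~: z)) m']
      end
  end.

Definition norm3_eq (N : nat) (A : {set {set 'I_N}}) (k : nat) : Prop :=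
  norm3_ge A k /\ forall m, norm3_ge A m -> m <= k.

(** If ||A||_3 <= k, some cut z of the ground set W of A fails the defining
    condition of ||A||_3 >= k+1: the sets of A inside z and those inside
    W \ z both have norm at most k-1, and the remaining sets of A meet both
    sides, so there are at most (2^|W∩z| - 1)(2^|W\z| - 1) of them.  By
    induction on k this gives |A| <= F(|W|, k) for
    F(s, k) = 2^s - 2^k 2^(s/2^k) + 2^k - 1, because F(s, 0) = 0 and
    F(s1, k) + F(s2, k) + (2^s1 - 1)(2^s2 - 1) falls short of F(s1+s2, k+1)
    by exactly 2^k (2^(s1/2^(k+1)) - 2^(s2/2^(k+1)))^2.  The argument never
    uses that the sets of A have at least two elements. *)

From mathcomp Require Import all_boot.
From Stdlib Require Import Reals Lra Psatz.
(* Reals overrides the nat_scope notations [<=], [*], [^] of ssrnat. *)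
Import ssrnat.

Definition norm3_bound (s k : nat) : R :=
  (2 ^ s - 2 ^ k * Rpower 2 (INR s / 2 ^ k) + 2 ^ k - 1)%R.

Lemma norm3_bound0 (s : nat) : norm3_bound s 0 = 0%R.
Proof. by rewrite /norm3_bound /= Rdiv_1_r Rpower_pow; lra. Qed.

Lemma norm3_boundS (s1 s2 k : nat) :
  (norm3_bound s1 k + norm3_bound s2 k + (2 ^ s1 - 1) * (2 ^ s2 - 1)
     <= norm3_bound (s1 + s2) k.+1)%R.
Proof.
rewrite /norm3_bound pow_add plus_INR.
set K := (2 ^ k)%R.
have K_gt0 : (0 < K)%R by apply: pow_lt; lra.
have pow2S : (2 ^ k.+1 = 2 * K)%R by [].
set u := Rpower 2 (INR s1 / 2 ^ k.+1).
set v := Rpower 2 (INR s2 / 2 ^ k.+1).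
have eu : Rpower 2 (INR s1 / K) = (u * u)%R.
  by rewrite /u -Rpower_plus pow2S; congr Rpower; field; lra.
have ev : Rpower 2 (INR s2 / K) = (v * v)%R.
  by rewrite /v -Rpower_plus pow2S; congr Rpower; field; lra.
have euv : Rpower 2 ((INR s1 + INR s2) / 2 ^ k.+1) = (u * v)%R.
  by rewrite /u /v -Rpower_plus; congr Rpower; field; lra.
rewrite eu ev euv pow2S.
have := Rmult_le_pos _ _ (Rlt_le _ _ K_gt0) (Rle_0_sqr (u - v)).
rewrite /Rsqr; nra.
Qed.

Lemma INR_expn2_sub1 (n : nat) : INR (2 ^ n - 1) = (2 ^ n - 1)%R.
Proof.
rewrite minus_INR; last by apply/leP; rewrite expn_gt0.
congr (_ - _)%R.
by elim: n => [|n IHn]; rewrite ?expnS ?mult_INR ?IHn //=; lra.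
Qed.

Lemma card_powersetD0 (T : finType) (X : {set T}) :
  #|powerset X :\ set0| = 2 ^ #|X| - 1.
Proof. by rewrite -card_powerset (cardsD1 set0 (powerset X)) !inE sub0set addKn. Qed.

Section Cut.

Variables (T : finType) (A : {set {set T}}) (W z : {set T}).
Hypothesis subW : forall a, a \in A -> a \subset W.

Lemma card_straddle_le :
  #|[set a in A | ~~ (a \subset z) & ~~ (a \subset ~: z)]|
    <= (2 ^ #|W :&: z| - 1) * (2 ^ #|W :\: z| - 1).
Proof.
rewrite -!card_powersetD0 -cardsX.
apply: leq_trans (leq_imset_card (fun p : {set T} * {set T} => p.1 :|: p.2) _).
apply/subset_leq_card/subsetP => a; rewrite inE => /and3P [aA not_sub_z not_sub_Cz].
apply/imsetP; exists (a :&: z, a :\: z); last by rewrite /= setID.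
rewrite !inE /= setI_eq0 disjoints_subset not_sub_Cz setD_eq0 not_sub_z.
by rewrite setSI ?setSD ?subW.
Qed.

Lemma card_le_cut :
  #|A| <= #|[set a in A | a \subset z]| + #|[set a in A | a \subset ~: z]|
          + (2 ^ #|W :&: z| - 1) * (2 ^ #|W :\: z| - 1).
Proof.
set S := [set a in A | ~~ (a \subset z) & ~~ (a \subset ~: z)].
have A_sub : A \subset [set a in A | a \subset z] :|: [set a in A | a \subset ~: z] :|: S.
  apply/subsetP => a aA; rewrite !inE aA /=.
  by case: (a \subset z); case: (a \subset ~: z).
apply: leq_trans (subset_leq_card A_sub) _.
apply: leq_trans (leq_card_setU _ _) _.
apply: leq_add; first exact: leq_card_setU.
exact: card_straddle_le.
Qed.

End Cut.

Lemma card_le_norm3_bound (N k : nat) (W : {set 'I_N}) (A : {set {set 'I_N}}) :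
  (forall a, a \in A -> a \subset W) -> ~~ norm3_ge A k.+1 ->
  (INR #|A| <= norm3_bound #|W| k)%R.
Proof.
elim: k W A => [|k IHk] W A subW.
  by rewrite /= negbK norm3_bound0 => /eqP ->; rewrite cards0; apply: Rle_refl.
move=> /forallPn [z]; rewrite negb_or => /andP [not_ge_z not_ge_Cz].
have le_z : (INR #|restr A z| <= norm3_bound #|W :&: z| k)%R.
  apply: IHk not_ge_z => a; rewrite inE => /andP [/subW aW az].
  by rewrite subsetI aW.
have le_Cz : (INR #|restr A (~: z)| <= norm3_bound #|W :\: z| k)%R.
  apply: IHk not_ge_Cz => a; rewrite inE => /andP [/subW aW aCz].
  by rewrite setDE subsetI aW.
rewrite -(cardsID z W); apply: (Rle_trans _ _ _ _ (norm3_boundS _ _ _)).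
apply: Rle_trans (le_INR _ _ (leP (@card_le_cut _ A W z subW))) _.
rewrite !plus_INR mult_INR !INR_expn2_sub1 -!/(restr A _); lra.
Qed.

Theorem theorem5p37 (N : nat) (A : {set {set 'I_N}}) (k : nat) :
  inP A -> norm3_eq A k ->
  (INR #|A| <= 2 ^ N - 2 ^ k * Rpower 2 (INR N / 2 ^ k) + 2 ^ k - 1)%R.
Proof.
move=> _ [_ norm_le_k].
rewrite -[in X in (_ <= X)%R](card_ord N) -cardsT.
apply: card_le_norm3_bound => [a _|]; first exact: subsetT.
by apply/negP => /norm_le_k; rewrite ltnn.
Qed.
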